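(* Let $U:\mathbb R^m_{++}\to\mathbb R$ be a concave NDAS function and let $s^{opt}$ be a maximizer of $U$ over $B_s$. For $i=0,\dots,k$ let $w^i\in W$ have weighted center $(x^i,y^i,s^i)$, let $g^i$ be a supergradient of $U$ at $s^i$, set $g^{iw}=(Y^i)^{-1}g^i$ and $W^i:=\{w:(g^{iw})^\top(w-w^i)\ge0\}\cap W$. Assume $w^i\in\mathrm{relint}\bigl(\bigcap_{j=0}^{i-1}W^j\bigr)$ for $i=1,\dots,k$. Then $$\Bigl(\bigcap_{j=0}^k W^j\Bigr)\cap W_{s^{opt}}\neq\emptyset.$$
   Context: Let $A\in\mathbb R^{m\times n}$ have full column rank $n\le m$ and $b\in\mathbb R^m$ be such that $\{x:Ax\le b\}$ is bounded with nonempty interior. For $w\in\mathbb R^m_{++}$ the weighted center of $w$ is the unique $(x,y,s)$ with $Ax+s=b$, $s>0$, $A^\top y=0$, $\mathrm{Diag}(s)y=w$ ($s$-vector $s$, $y$-vector $y$). Capital letters denote diagonal matrices of vectors. $W=\{w\in\mathbb R^m:w>0,\ e^\top w=1\}$. Centric $s$-vectors are $s$-vectors of weighted centers of elements of $W$; $B_s$ is their set; for centric $s$, $W_s=\{w\in W:$ the $s$-vector of $w$ is $s\}$. Supergradient of concave $U$ at $s^0$: $g$ with $U(s)\le U(s^0)+g^\top(s-s^0)$ for all $s$. A function $f:\mathbb R^m_{++}\to\mathbb R$ is NDAS if for every $d\in\mathbb R^m_{++}$, with $D=\mathrm{Diag}(d)$: (1) $f(s)\le\max\{f(Ds),f(D^{-1}s)\}$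 for all $s\in\mathbb R^m_{++}$; (2) if $f(s^0)\le f(Ds^0)$ for a single $s^0\in\mathbb R^m_{++}$, then $f(s)\le f(Ds)$ for all $s\in\mathbb R^m_{++}$. *)

From Stdlib Require Import Reals.
From mathcomp Require Import ssreflect ssrbool ssrfun eqtype ssrnat seq fintype bigop.
Set Implicit Arguments. Unset Strict Implicit. Unset Printing Implicit Defensive.
Open Scope R_scope.

Definition vec (m : nat) := 'I_m -> R.

Definition sumR (m : nat) (f : 'I_m -> R) : R := \big[Rplus/0]_(i < m) f i.
Definition dot (m : nat) (u v : vec m) : R := sumR (fun i => u i * v i).

Definition matvec m n (A : 'I_m -> 'I_n -> R) (x : vec n) : vec m :=
  fun i => sumR (fun j => A i j * x j).
Definition tmatvec m n (A : 'I_m -> 'I_n -> R) (y : vec m) : vec n :=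
  fun j => sumR (fun i => A i j * y i).

Definition pos m (s : vec m) : Prop := forall i, 0 < s i.

Definition full_col_rank m n (A : 'I_m -> 'I_n -> R) : Prop :=
  forall x : vec n, (forall i, matvec A x i = 0) -> forall j, x j = 0.

Definition in_poly m n (A : 'I_m -> 'I_n -> R) (b : vec m) (x : vec n) : Prop :=
  forall i, matvec A x i <= b i.

Definition poly_bounded m n (A : 'I_m -> 'I_n -> R) (b : vec m) : Prop :=
  exists M, forall x, in_poly A b x -> forall j, Rabs (x j) <= M.

Definition poly_nonempty_interior m n (A : 'I_m -> 'I_n -> R) (b : vec m) : Prop :=
  exists (x0 : vec n) (eps : R), 0 < eps /\
    forall x : vec n, (forall j, Rabs (x j - x0 j) < eps) -> in_poly A b x.

Definition weighted_center m n (A : 'I_m -> 'I_n -> R) (b : vec m)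
    (w : vec m) (x : vec n) (y s : vec m) : Prop :=
  (forall i, matvec A x i + s i = b i) /\ pos s /\
  (forall j, tmatvec A y j = 0) /\ (forall i, s i * y i = w i).

Definition inW m (w : vec m) : Prop := pos w /\ sumR w = 1.

(* s is the s-vector of the weighted center of w
   (well defined since the weighted center is unique) *)
Definition svec_of m n (A : 'I_m -> 'I_n -> R) (b : vec m) (w s : vec m) : Prop :=
  exists (x : vec n) (y : vec m), weighted_center A b w x y s.

Definition in_Bs m n (A : 'I_m -> 'I_n -> R) (b : vec m) (s : vec m) : Prop :=
  exists w, inW w /\ svec_of A b w s.

Definition in_Ws m n (A : 'I_m -> 'I_n -> R) (b : vec m) (s w : vec m) : Prop :=
  inW w /\ svec_of A b w s.

Definition concave_pos m (U : vec m -> R) : Prop :=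
  forall (s t : vec m) (l : R), pos s -> pos t -> 0 <= l <= 1 ->
    l * U s + (1 - l) * U t <= U (fun i => l * s i + (1 - l) * t i).

Definition supergradient m (U : vec m -> R) (s0 g : vec m) : Prop :=
  forall s : vec m, pos s -> U s <= U s0 + dot g (fun i => s i - s0 i).

Definition Dmul m (d s : vec m) : vec m := fun i => d i * s i.
Definition Dinv m (d s : vec m) : vec m := fun i => s i / d i.

Definition NDAS m (f : vec m -> R) : Prop :=
  forall d : vec m, pos d ->
    (forall s, pos s -> f s <= Rmax (f (Dmul d s)) (f (Dinv d s))) /\
    ((exists s0, pos s0 /\ f s0 <= f (Dmul d s0)) ->
       forall s, pos s -> f s <= f (Dmul d s)).

Definition maximizer_Bs m n (A : 'I_m -> 'I_n -> R) (b : vec m) (U : vec m -> R)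
    (sopt : vec m) : Prop :=
  in_Bs A b sopt /\ forall s, in_Bs A b s -> U s <= U sopt.

Definition aff_hull m (C : vec m -> Prop) (z : vec m) : Prop :=
  exists (p : nat) (P : 'I_p -> vec m) (c : 'I_p -> R),
    (forall j, C (P j)) /\ sumR c = 1 /\
    forall i, z i = sumR (fun j => c j * P j i).

Definition relint m (C : vec m -> Prop) (x : vec m) : Prop :=
  C x /\ exists eps, 0 < eps /\
    forall z, aff_hull C z -> (forall i, Rabs (z i - x i) < eps) -> C z.

Definition Wcut m (gj yj wj : vec m) (w : vec m) : Prop :=
  inW w /\ 0 <= dot (fun i => gj i / yj i) (fun i => w i - wj i).

(* For positive vectors u, v write u ≽ v when rescaling the
   argument of U by the ratio u/v never decreases U.  For an NDAS function this
   relation is a total preorder on positive vectors (NDAS applied to the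
   scaling d = u/v).  Among y^0, ..., y^k pick a ≽-maximal y^j and put
   v := Y^j s^opt.  By LP duality for the weighted-center system,
   e^T v = b^T y^j = (s^j)^T y^j = e^T w^j = 1, so v ∈ W_{s^opt}.  For every l,
   (g^{lw})^T (v - w^l) = (g^l)^T ((Y^l)^{-1} v - s^l)
                       >= U((Y^l)^{-1} Y^j s^opt) - U(s^l)
                       >= U(s^opt) - U(s^l) >= 0
   by the supergradient inequality, maximality of y^j and optimality of s^opt.
   Hence v lies in every cut W^l. *)
From Pilot Require Import Defs.
From HB Require Import structures.
From Stdlib Require Import Reals Lra FunctionalExtensionality.
From mathcomp Require Import ssreflect ssrbool ssrfun eqtype ssrnat seq fintype bigop.
Set Implicit Arguments. Unset Strict Implicit.
Open Scope R_scope.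

(* Addition on R is a commutative monoid, so the generic bigop lemmas apply to sumR. *)
HB.instance Definition _ :=
  Monoid.isComLaw.Build R 0 Rplus
    (fun a b c => esym (Rplus_assoc a b c)) Rplus_comm Rplus_0_l.

Lemma sumR_add m (f g : 'I_m -> R) : sumR (fun i => f i + g i) = sumR f + sumR g.
Proof. by rewrite /sumR big_split. Qed.

Lemma sumR_scal m c (f : 'I_m -> R) : sumR (fun i => c * f i) = c * sumR f.
Proof. rewrite /sumR; elim/big_rec2: _ => [|i a b' _ ->]; lra. Qed.

Lemma sumR_ext m (f g : 'I_m -> R) : (forall i, f i = g i) -> sumR f = sumR g.
Proof. by move=> efg; rewrite /sumR; apply: eq_bigr => i _. Qed.

Lemma sumR_exch m n (F : 'I_m -> 'I_n -> R) :
  sumR (fun i => sumR (fun j => F i j)) = sumR (fun j => sumR (fun i => F i j)).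
Proof. by rewrite /sumR exchange_big. Qed.

Definition ratio m (u v : vec m) : vec m := fun i => u i / v i.

Lemma pos_ratio m (u v : vec m) : Defs.pos u -> Defs.pos v -> Defs.pos (ratio u v).
Proof. by move=> pu pv i; apply: Rdiv_lt_0_compat. Qed.

Lemma pos_Dmul m (d t : vec m) : Defs.pos d -> Defs.pos t -> Defs.pos (Dmul d t).
Proof. by move=> pd pt i; apply: Rmult_lt_0_compat. Qed.

Section WeightedCenters.
Variables (m n : nat) (A : 'I_m -> 'I_n -> R) (b : vec m).

Lemma slack_dot_dual_null (x : vec n) (s y : vec m) :
  (forall i, matvec A x i + s i = b i) -> (forall j, tmatvec A y j = 0) ->
  dot s y = dot b y.
Proof.
move=> primal dual.
have Ax_y0 : dot (matvec A x) y = 0.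
  rewrite /dot /matvec.
  rewrite (sumR_ext (g := fun i => sumR (fun j => x j * (A i j * y i)))); last first.
    by move=> i; rewrite Rmult_comm -sumR_scal; apply: sumR_ext => j; ring.
  rewrite sumR_exch (sumR_ext (g := fun j => 0 * x j)); last first.
    by move=> j; rewrite sumR_scal; have := dual j; rewrite /tmatvec => ->; ring.
  by rewrite sumR_scal; ring.
rewrite -[LHS]Rplus_0_r -Ax_y0 /dot -sumR_add.
by apply: sumR_ext => i; rewrite -(primal i); ring.
Qed.

Lemma center_dual_pos (w : vec m) (x : vec n) (y s : vec m) :
  Defs.pos w -> weighted_center A b w x y s -> Defs.pos y.
Proof.
move=> pw [_ [ps [_ sy]]] i.
have := pw i; rewrite -sy => swi; have := ps i => si.
destruct (Rle_or_lt (y i) 0) as [yi|yi] => //; nra.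
Qed.

(* Pairing any primal slack s' with the dual vector of the center of w gives e^T w;
   in particular s' ∘ y is a weight vector whenever w ∈ W. *)
Lemma center_weight_sum (w : vec m) (x x' : vec n) (y s s' : vec m) :
  weighted_center A b w x y s -> (forall i, matvec A x' i + s' i = b i) ->
  sumR (fun i => s' i * y i) = sumR w.
Proof.
move=> [primal [_ [dual sy]]] primal'.
rewrite -[sumR (fun i => _)]/(dot s' y) (slack_dot_dual_null primal' dual).
rewrite -(slack_dot_dual_null primal dual); exact: sumR_ext.
Qed.

End WeightedCenters.

Section ScalingPreorder.
Variables (m : nat) (U : vec m -> R).

Definition scale_ge (u v : vec m) : Prop :=
  forall t, Defs.pos t -> U t <= U (Dmul (ratio u v) t).

Lemma scale_ge_refl (u : vec m) : Defs.pos u -> scale_ge u u.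
Proof.
move=> pu t _; apply: Req_le; f_equal; apply: functional_extensionality => i.
by rewrite /Dmul /ratio; have := pu i => ui; field; lra.
Qed.

Lemma scale_ge_trans (u v z : vec m) :
  Defs.pos v -> Defs.pos z -> scale_ge u v -> scale_ge v z -> scale_ge u z.
Proof.
move=> pv pz uv vz t pt.
have pt' : Defs.pos (Dmul (ratio v z) t) by apply: pos_Dmul => //; exact: pos_ratio.
apply: Rle_trans (vz t pt) _; apply: Rle_trans (uv _ pt') _.
apply: Req_le; f_equal; apply: functional_extensionality => i.
by rewrite /Dmul /ratio; have := pv i; have := pz i => zi vi; field; lra.
Qed.

(* NDAS makes ≽ total: test NDAS(1) at the all-ones vector with d = u/v. *)
Lemma scale_ge_total (u v : vec m) :
  NDAS U -> Defs.pos u -> Defs.pos v -> scale_ge u v \/ scale_ge v u.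
Proof.
move=> ndas pu pv.
have [ndas_max _] := ndas _ (pos_ratio pu pv).
have [_ ndas_vu] := ndas _ (pos_ratio pv pu).
have [_ ndas_uv] := ndas _ (pos_ratio pu pv).
have one_pos : Defs.pos (fun _ : 'I_m => 1) by move=> i; lra.
have := ndas_max _ one_pos; rewrite /Rmax; case: Rle_dec => _ up.
- right; apply: ndas_vu; exists (fun _ => 1); split => //.
  suff -> : Dmul (ratio v u) (fun _ => 1) = Dinv (ratio u v) (fun _ => 1) by [].
  apply: functional_extensionality => i; rewrite /Dmul /Dinv /ratio.
  by have := pu i; have := pv i => vi ui; field; lra.
- by left; apply: ndas_uv; exists (fun _ => 1); split => //; lra.
Qed.

End ScalingPreorder.

Lemma total_preorder_max (P : nat -> nat -> Prop) (k : nat) :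
  (forall j, (j <= k)%N -> P j j) ->
  (forall i j l, (j <= k)%N -> (l <= k)%N -> P i j -> P j l -> P i l) ->
  (forall j l, (j <= k)%N -> (l <= k)%N -> P j l \/ P l j) ->
  exists j, (j <= k)%N /\ forall l, (l <= k)%N -> P j l.
Proof.
move=> refl trans total.
suff: forall k', (k' <= k)%N -> exists j, (j <= k')%N /\ forall l, (l <= k')%N -> P j l.
  by move=> /(_ k (leqnn k)) [j [jk maxj]]; exists j.
elim=> [_|k' IH k'k].
  by exists 0%N; split => // l; rewrite leqn0 => /eqP ->; apply: refl.
have [j [jk' maxj]] := IH (ltnW k'k).
have jk : (j <= k)%N by apply: leq_trans jk' (ltnW k'k).
case: (total j k'.+1 jk k'k) => [jk1|k1j].
- exists j; split; first exact: leqW.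
  by move=> l; rewrite leq_eqVlt => /orP [/eqP -> | /maxj].
- exists k'.+1; split => // l; rewrite leq_eqVlt => /orP [/eqP -> | lk'].
    exact: refl.
  by apply: trans k1j (maxj l lk') => //; apply: leq_trans (ltnW lk') k'k.
Qed.

Lemma Dmul_ratio m (u v t : vec m) :
  Defs.pos v -> Dmul (ratio u v) t = Dinv v (fun i => t i * u i).
Proof.
move=> pv; apply: functional_extensionality => i; rewrite /Dmul /Dinv /ratio.
by have := pv i => vi; field; lra.
Qed.

(* Cut criterion: a weight v lies in the cut W^l of the query point w^l = s^l ∘ y^l
   as soon as U does not decrease from s^l to (Y^l)^{-1} v, because
   (g^{lw})^T (v - w^l) = (g^l)^T ((Y^l)^{-1} v - s^l) >= U((Y^l)^{-1} v) - U(s^l). *)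
Lemma cut_of_utility_gain m (U : vec m -> R) (gl yl wl sl v : vec m) :
  Defs.pos yl -> (forall i, sl i * yl i = wl i) -> supergradient U sl gl ->
  inW v -> U sl <= U (Dinv yl v) -> Wcut gl yl wl v.
Proof.
move=> pyl slyl super vW gain; split => //.
have [pv _] := vW.
have rewrite_cut : dot (fun i => gl i / yl i) (fun i => v i - wl i)
                   = dot gl (fun i => Dinv yl v i - sl i).
  rewrite /dot /Dinv; apply: sumR_ext => i; rewrite -slyl.
  by have := pyl i => yli; field; lra.
have pDv : Defs.pos (Dinv yl v) by move=> i; apply: Rdiv_lt_0_compat.
by rewrite rewrite_cut; have := super _ pDv; lra.
Qed.

Theorem proposition3p2 (m n : nat) (A : 'I_m -> 'I_n -> R) (b : vec m)
  (Hnm : (n <= m)%N) (Hrank : full_col_rank A)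
  (Hbdd : poly_bounded A b) (Hint : poly_nonempty_interior A b)
  (U : vec m -> R) (HUc : concave_pos U) (HUn : NDAS U)
  (sopt : vec m) (Hopt : maximizer_Bs A b U sopt)
  (k : nat) (w : nat -> vec m) (x : nat -> vec n) (y s g : nat -> vec m)
  (Hw : forall i, (i <= k)%N -> inW (w i))
  (Hc : forall i, (i <= k)%N -> weighted_center A b (w i) (x i) (y i) (s i))
  (Hg : forall i, (i <= k)%N -> supergradient U (s i) (g i))
  (Hrel : forall i, (1 <= i)%N -> (i <= k)%N ->
     relint (fun v => forall j, (j < i)%N -> Wcut (g j) (y j) (w j) v) (w i)) :
  exists v : vec m,
    (forall j, (j <= k)%N -> Wcut (g j) (y j) (w j) v) /\ in_Ws A b sopt v.
Proof.
have ypos l : (l <= k)%N -> Defs.pos (y l).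
  by move=> lk; have [pw _] := Hw l lk; exact: center_dual_pos pw (Hc l lk).
have [j [jk jmax]] : exists j, (j <= k)%N /\
    forall l, (l <= k)%N -> scale_ge U (y j) (y l).
  apply: total_preorder_max => [l lk | i l p lk pk | l p lk pk].
  - exact: scale_ge_refl (ypos l lk).
  - exact: scale_ge_trans (ypos l lk) (ypos p pk).
  - exact: scale_ge_total HUn (ypos l lk) (ypos p pk).
have [[wo [_ [xo [yo [primal_opt [sopt_pos _]]]]]] sopt_max] := Hopt.
have [_ [_ [dual_j _]]] := Hc j jk.
pose v := fun i => sopt i * y j i.
have vW : inW v.
  split; first by move=> i; apply: Rmult_lt_0_compat; [exact: sopt_pos | exact: ypos].
  by rewrite (center_weight_sum (Hc j jk) primal_opt); have [_ ->] := Hw j jk.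
exists v; split; last by split => //; exists xo, (y j).
move=> l lk; have [_ [_ [_ slyl]]] := Hc l lk.
apply: cut_of_utility_gain (ypos l lk) slyl (Hg l lk) vW _.
have sl_le_opt : U (s l) <= U sopt.
  by apply: sopt_max; exists (w l); split; [exact: Hw | exists (x l), (y l); exact: Hc].
have := jmax l lk sopt sopt_pos; rewrite Dmul_ratio; last exact: ypos.
exact: Rle_trans sl_le_opt.
Qed.
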